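(* Assume the standing setup, let $H\le\Gamma$ and let $\mathcal G_H(P)$ be as defined in the context, for an object $P$ of $\mathcal L$. Regard $\Gamma/H$ as a discrete category (objects the left cosets, only identity morphisms). Then the functor $\delta_P:\mathcal G_H(P)\to\Gamma/H$ sending $(P^\alpha,\alpha)$ to $\widehat\Theta(\alpha)^{-1}H$ is well defined and is an equivalence of categories.
   Context: Standing setup: $(S,\mathcal F,\mathcal L)$ is a $p$-local finite group with centric linking system $\mathcal L$ (objects the $\mathcal F$-centric subgroups, projection $\pi:\mathcal L\to\mathcal F$), and a fixed compatible set of inclusions $\iota_P^Q$ ($\pi(\iota_P^Q)$ the inclusion, $\iota_Q^R\iota_P^Q=\iota_P^R$, $\iota_S^S=\mathrm{Id}$) with respect to which morphisms are restricted. For $\alpha\in\operatorname{Mor}_{\mathcal L}(P,S)$, $P^\alpha=\pi(\alpha)(P)$ and $\alpha$ also denotes the restricted isomorphism $P\to P^\alpha$. $\Gamma=\Gamma_{p'}(\mathcal F)$ (finite, order prime to $p$, a quotient of $\pi_1(|\mathcal L|,S)$) and $\widehat\Theta:\mathcal L\to\mathcal B(\Gamma)$ sends $f:P\to Q$ to the image of the class of the loop $\iota_Q^S*f*(\iota_P^S)^{-1}$; its restriction $\operatorname{Aut}_{\mathcal L}(S)\to\Gamma$ is surjective. $\mathcal L_H$ is the subcategory of $\mathcal L$ with all objects and morphisms $\widehat\Theta^{-1}(H)$, $\iota:\mathcal L_H\to\mathcal L$ the inclusion. $P\downarrow\iota$ has objects $(Q,\alpha)$, $\alpha\in\operatorname{Mor}_{\mathcal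 L}(P,Q)$, and morphisms $(Q,\alpha)\to(Q',\alpha')$ the $\psi\in\operatorname{Mor}_{\mathcal L_H}(Q,Q')$ with $\psi\alpha=\alpha'$; $\mathcal G_H(P)$ is its full subcategory on the objects $(P^\alpha,\alpha)$, $\alpha\in\operatorname{Mor}_{\mathcal L}(P,S)$. *)

From HB Require Import structures.
From mathcomp Require Import all_boot all_fingroup all_solvable.
From Stdlib Require Import ProofIrrelevance.

Set Implicit Arguments.
Unset Strict Implicit.
Unset Printing Implicit Defensive.

Local Open Scope group_scope.

Record category := Category {
  ob : Type;
  hom : ob -> ob -> Type;
  idc : forall a, hom a a;
  compc : forall a b c, hom b c -> hom a b -> hom a c;
  compc_id_l : forall a b (f : hom a b), compc (idc b) f = f;
  compc_id_r : forall a b (f : hom a b), compc f (idc a) = f;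
  compc_assoc : forall a b c d (h : hom c d) (g : hom b c) (f : hom a b),
      compc h (compc g f) = compc (compc h g) f
}.
Arguments ob : clear implicits.
Arguments hom : clear implicits.
Arguments idc {C} a : rename.
Arguments compc {C a b c} : rename.

Record functor (C D : category) := Functor {
  fob : ob C -> ob D;
  fhom : forall a b, hom C a b -> hom D (fob a) (fob b);
  fhom_id : forall a, fhom (idc a) = idc (fob a);
  fhom_comp : forall a b c (g : hom C b c) (f : hom C a b),
      fhom (compc g f) = compc (fhom g) (fhom f)
}.
Arguments fob {C D} F _ : rename.
Arguments fhom {C D} F {a b} _ : rename.

Definition is_iso (C : category) (a b : ob C) (f : hom C a b) : Prop :=
  exists g : hom C b a, compc g f = idc a /\ compc f g = idc b.

Definition fully_faithful (C D : category) (F : functor C D) : Prop :=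
  forall a b : ob C, bijective (@fhom C D F a b).

Definition essentially_surjective (C D : category) (F : functor C D) : Prop :=
  forall d : ob D, exists c : ob C, exists f : hom D (fob F c) d, is_iso f.

Definition is_equivalence (C D : category) (F : functor C D) : Prop :=
  fully_faithful F /\ essentially_surjective F.

Definition disc_hom (T : Type) (a b : T) : Type := a = b.

Program Definition discrete_cat (T : Type) : category :=
  @Category T (@disc_hom T) (fun a => erefl a)
    (fun a b c (g : disc_hom b c) (f : disc_hom a b) => etrans f g) _ _ _.
Next Obligation. intros; apply: (@proof_irrelevance (_ = _)). Qed.
Next Obligation. intros; apply: (@proof_irrelevance (_ = _)). Qed.
Next Obligation. intros; apply: (@proof_irrelevance (_ = _)). Qed.

(* The standing setup: a p-local finite group (S,F,L) with centric    *)
(* linking system L, projection pi, compatible inclusions, restricted *)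
(* isomorphisms, and the map  Theta-hat : L -> B(Gamma).              *)

Record linking_setup (gT gammaT : finGroupType) (p : nat) := LinkingSetup {
  (* objects of L (the F-centric subgroups) and their underlying groups *)
  Lob : Type;
  grp : Lob -> {group gT};
  Sob : Lob;
  p_prime : prime p;
  S_pgroup : p.-group (grp Sob);
  obj_sub : forall P, grp P \subset grp Sob;
  Lmor : Lob -> Lob -> Type;
  Lid : forall P, Lmor P P;
  Lcomp : forall P Q R, Lmor Q R -> Lmor P Q -> Lmor P R;
  Lcomp_id_l : forall P Q (f : Lmor P Q), Lcomp (Lid Q) f = f;
  Lcomp_id_r : forall P Q (f : Lmor P Q), Lcomp f (Lid P) = f;
  Lcomp_assoc : forall P Q R T (h : Lmor R T) (g : Lmor Q R) (f : Lmor P Q),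
      Lcomp h (Lcomp g f) = Lcomp (Lcomp h g) f;
  piL : forall P Q, Lmor P Q -> gT -> gT;
  piL_morph : forall P Q (f : Lmor P Q),
      {in grp P &, {morph piL f : x y / x * y}};
  piL_inj : forall P Q (f : Lmor P Q), {in grp P &, injective (piL f)};
  piL_into : forall P Q (f : Lmor P Q), piL f @: grp P \subset grp Q;
  piL_id : forall P, {in grp P, piL (Lid P) =1 id};
  piL_comp : forall P Q R (g : Lmor Q R) (f : Lmor P Q),
      {in grp P, piL (Lcomp g f) =1 piL g \o piL f};
  incl : forall P Q, grp P \subset grp Q -> Lmor P Q;
  incl_pi : forall P Q (h : grp P \subset grp Q), {in grp P, piL (incl h) =1 id};
  incl_comp : forall P Q R (hPQ : grp P \subset grp Q) (hQR : grp Q \subset grp R),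
      Lcomp (incl hQR) (incl hPQ) = incl (subset_trans hPQ hQR);
  incl_SS : incl (subxx (grp Sob)) = Lid Sob;
  imob : forall P, Lmor P Sob -> Lob;
  imob_grp : forall P (a : Lmor P Sob), (grp (imob a) : {set gT}) = piL a @: grp P;
  resL : forall P (a : Lmor P Sob), Lmor P (imob a);
  resL_spec : forall P (a : Lmor P Sob), Lcomp (incl (obj_sub (imob a))) (resL a) = a;
  resL_iso : forall P (a : Lmor P Sob), exists b : Lmor (imob a) P,
      Lcomp b (resL a) = Lid P /\ Lcomp (resL a) b = Lid (imob a);
  (* Gamma = Gamma_{p'}(F), finite of order prime to p, and a functor
     theta : L -> B(Gamma) representing the quotient map pi_1(|L|,S) -> Gamma:
     the class of a loop (an edge path) is sent to the product of the
     theta-images of its edges (inverse edges to inverses). *)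
  Gam : {group gammaT};
  Gam_p'group : p^'.-group Gam;
  theta : forall P Q, Lmor P Q -> gammaT;
  theta_in : forall P Q (f : Lmor P Q), theta f \in Gam;
  theta_id : forall P, theta (Lid P) = 1;
  theta_comp : forall P Q R (g : Lmor Q R) (f : Lmor P Q),
      theta (Lcomp g f) = theta g * theta f;
  (* Theta-hat restricted to Aut_L(S) is onto Gamma *)
  Theta_onto_AutS : forall g, g \in Gam -> exists phi : Lmor Sob Sob,
      theta (incl (obj_sub Sob)) * theta phi * (theta (incl (obj_sub Sob)))^-1 = g
}.

Section Setup.
Variables (gT gammaT : finGroupType) (p : nat) (L : linking_setup gT gammaT p).

(* Theta-hat(f) = image of the class of the loop  iota_Q^S * f * (iota_P^S)^{-1} *)
Definition Thetah (P Q : Lob L) (f : @Lmor _ _ _ L P Q) : gammaT :=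
  theta (incl (obj_sub Q)) * theta f * (theta (incl (obj_sub P)))^-1.

Lemma Thetah_id (P : Lob L) : Thetah (Lid P) = 1.
Proof. by rewrite /Thetah theta_id mulg1 mulgV. Qed.

Lemma Thetah_comp (P Q R : Lob L) (g : @Lmor _ _ _ L Q R) (f : @Lmor _ _ _ L P Q) :
  Thetah (Lcomp g f) = Thetah g * Thetah f.
Proof.
rewrite /Thetah theta_comp !mulgA; congr (_ * _).
by rewrite -!mulgA; congr (_ * _); rewrite mulKg.
Qed.

Variable H : {group gammaT}.

Definition LH_mor (P Q : Lob L) (f : @Lmor _ _ _ L P Q) : Prop := Thetah f \in H.

(* The category G_H(P): objects (P^alpha, alpha), alpha in Mor_L(P,S);
   morphisms (P^a,a) -> (P^b,b) are psi in Mor_{L_H}(P^a,P^b) with psi a = b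
   (a, b the restricted isomorphisms). *)
Definition GH_hom (P : Lob L) (a b : @Lmor _ _ _ L P (Sob L)) : Type :=
  {psi : @Lmor _ _ _ L (imob a) (imob b) | LH_mor psi /\ Lcomp psi (resL a) = resL b}.

Lemma GH_id_proof (P : Lob L) (a : @Lmor _ _ _ L P (Sob L)) :
  LH_mor (Lid (imob a)) /\ Lcomp (Lid (imob a)) (resL a) = resL a.
Proof. by split; [rewrite /LH_mor Thetah_id group1 | rewrite Lcomp_id_l]. Qed.

Definition GH_id (P : Lob L) (a : @Lmor _ _ _ L P (Sob L)) : GH_hom a a :=
  exist _ (Lid (imob a)) (GH_id_proof a).

Lemma GH_comp_proof (P : Lob L) (a b c : @Lmor _ _ _ L P (Sob L))
  (g : GH_hom b c) (f : GH_hom a b) :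
  LH_mor (Lcomp (proj1_sig g) (proj1_sig f)) /\
  Lcomp (Lcomp (proj1_sig g) (proj1_sig f)) (resL a) = resL c.
Proof.
case: g => g [Hg Eg]; case: f => f [Hf Ef] /=; split.
  by rewrite /LH_mor Thetah_comp groupM.
by rewrite -Lcomp_assoc Ef Eg.
Qed.

Definition GH_comp (P : Lob L) (a b c : @Lmor _ _ _ L P (Sob L))
  (g : GH_hom b c) (f : GH_hom a b) : GH_hom a c :=
  exist _ (Lcomp (proj1_sig g) (proj1_sig f)) (GH_comp_proof g f).

Lemma GH_sig_eq (P : Lob L) (a b : @Lmor _ _ _ L P (Sob L)) (f g : GH_hom a b) :
  proj1_sig f = proj1_sig g -> f = g.
Proof.
case: f => f Pf; case: g => g Pg /= E; subst g.
by rewrite (proof_irrelevance _ Pf Pg).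
Qed.

Program Definition G_H (P : Lob L) : category :=
  @Category (@Lmor _ _ _ L P (Sob L)) (@GH_hom P) (@GH_id P) (@GH_comp P) _ _ _.
Next Obligation. intros. apply: (GH_sig_eq (a:=a) (b:=b)). rewrite /= Lcomp_id_l. done. Qed.
Next Obligation. intros. apply: (GH_sig_eq (a:=a) (b:=b)). by rewrite /= Lcomp_id_r. Qed.
Next Obligation. intros. apply: (GH_sig_eq (a:=a) (b:=d)). by rewrite /= Lcomp_assoc. Qed.

Definition left_cosets := {A : {set gammaT} | A \in lcosets H (Gam L)}.
Definition GamH_cat : category := discrete_cat left_cosets.

End Setup.

(* Theta-hat is a functor to Gamma that is trivial on the inclusions, so it does
   not see the restriction [alpha |-> P^alpha]; hence a morphism [psi] of
   G_H(P) from [(P^alpha, alpha)] to [(P^beta, beta)] has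
   Theta-hat(beta) = Theta-hat(psi) Theta-hat(alpha) with Theta-hat(psi) in H, and
   the cosets agree.  Conversely, since the restricted [alpha] is an isomorphism,
   [psi] is forced to be [beta alpha^-1], which lies in L_H exactly when the two
   cosets agree; so the hom-sets of G_H(P) have at most one element and are
   nonempty exactly over equal cosets.  Essential surjectivity comes from the
   surjectivity of Theta-hat on Aut_L(S), precomposed with iota_P^S. *)

From Pilot Require Import Defs.
From mathcomp Require Import all_boot all_fingroup all_solvable.
From Stdlib Require Import ProofIrrelevance.

Set Implicit Arguments.
Unset Strict Implicit.
Unset Printing Implicit Defensive.

Local Open Scope group_scope.

Lemma bij_subsingleton (A B : Type) (f : A -> B) :
  (forall x y : A, x = y) -> (forall x y : B, x = y) -> inhabited (B -> A) ->
  bijective f.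
Proof. by move=> eqA eqB [g]; exists g => [x | y]; [apply: eqA | apply: eqB]. Qed.

Section DiscreteTarget.
Variables (C : category) (T : Type).

Program Definition functor_to_discrete (f : ob C -> T)
    (f_hom : forall a b, hom C a b -> f a = f b) : functor C (discrete_cat T) :=
  @Functor C (discrete_cat T) f f_hom _ _.
Next Obligation. by move=> *; apply: (@proof_irrelevance (_ = _)). Qed.
Next Obligation. by move=> *; apply: (@proof_irrelevance (_ = _)). Qed.

(* Unqualified, [is_iso] would be the isomorphism predicate of [morphism]. *)
Lemma discrete_is_iso (a b : T) (e : hom (discrete_cat T) a b) : Defs.is_iso e.
Proof. by exists (esym (e : a = b)); split; apply: (@proof_irrelevance (_ = _)). Qed.

Variable F : functor C (discrete_cat T).

Lemma fully_faithful_to_discrete :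
  (forall a b (f g : hom C a b), f = g) ->
  (forall a b, inhabited (fob F a = fob F b -> hom C a b)) -> fully_faithful F.
Proof.
move=> hom_uniq hom_of_eq a b.
apply: bij_subsingleton; first exact: hom_uniq.
- by move=> e e'; apply: (@proof_irrelevance (_ = _)).
- exact: hom_of_eq.
Qed.

Lemma essentially_surjective_to_discrete :
  (forall d : T, exists c, fob F c = d) -> essentially_surjective F.
Proof. by move=> Fsurj d; have [c Fc] := Fsurj d; exists c, Fc; apply: discrete_is_iso. Qed.

End DiscreteTarget.

Lemma eq_lcosetsV (gT : finGroupType) (H : {group gT}) (x y : gT) :
  (x^-1 *: H = y^-1 *: H) <-> (y * x^-1 \in H).
Proof.
rewrite -{2}[y]invgK -mem_lcoset.
by split => [<- | /lcoset_eqP //]; apply: lcoset_refl.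
Qed.

Section ThetaHat.
Variables (gT gammaT : finGroupType) (p : nat) (L : linking_setup gT gammaT p).

Lemma theta_incl_S : theta (incl (obj_sub (Sob L))) = 1.
Proof.
have -> : obj_sub (Sob L) = subxx (grp (Sob L)) by apply: proof_irrelevance.
by rewrite incl_SS theta_id.
Qed.

Lemma Thetah_incl (Q : Lob L) : Thetah (incl (obj_sub Q)) = 1.
Proof. by rewrite /Thetah theta_incl_S mul1g mulgV. Qed.

Lemma Thetah_resL (P : Lob L) (a : Lmor P (Sob L)) : Thetah (resL a) = Thetah a.
Proof.
have := congr1 (@Thetah _ _ _ L P (Sob L)) (resL_spec a).
by rewrite Thetah_comp Thetah_incl mul1g.
Qed.

Lemma Thetah_in (P Q : Lob L) (f : Lmor P Q) : Thetah f \in Gam L.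
Proof. by rewrite /Thetah !groupM ?groupV ?theta_in. Qed.

Lemma Thetah_left_inverse (P Q : Lob L) (f : Lmor P Q) (g : Lmor Q P) :
  Lcomp g f = Lid P -> Thetah g = (Thetah f)^-1.
Proof. by move=> gf; apply: (mulIg (Thetah f)); rewrite -Thetah_comp gf Thetah_id mulVg. Qed.

Variables (H : {group gammaT}) (P : Lob L).

Lemma GH_hom_Thetah (a b : Lmor P (Sob L)) (psi : GH_hom H a b) :
  Thetah b = Thetah (sval psi) * Thetah a.
Proof.
case: psi => psi [_ psi_a] /=.
by rewrite -Thetah_resL -psi_a Thetah_comp Thetah_resL.
Qed.

Lemma GH_hom_uniq (a b : Lmor P (Sob L)) (psi phi : GH_hom H a b) : psi = phi.
Proof.
have [a' [a'a aa']] := resL_iso a.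
have sval_eq (chi : GH_hom H a b) : sval chi = Lcomp (resL b) a'.
  case: chi => chi [_ chi_a] /=.
  by rewrite -chi_a -Lcomp_assoc aa' Lcomp_id_r.
by apply: GH_sig_eq; rewrite !sval_eq.
Qed.

Lemma lcosetV_Thetah_mem (a : Lmor P (Sob L)) : (Thetah a)^-1 *: H \in lcosets H (Gam L).
Proof. by rewrite -lcosetE imset_f ?groupV ?Thetah_in. Qed.

Definition delta_ob (a : Lmor P (Sob L)) : left_cosets L H :=
  exist _ ((Thetah a)^-1 *: H) (lcosetV_Thetah_mem a).

Lemma delta_ob_eq (a b : Lmor P (Sob L)) :
  delta_ob a = delta_ob b <-> Thetah b * (Thetah a)^-1 \in H.
Proof. by split => [/(congr1 val)/eq_lcosetsV // | /eq_lcosetsV e]; apply: val_inj. Qed.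

Lemma delta_ob_hom (a b : Lmor P (Sob L)) : GH_hom H a b -> delta_ob a = delta_ob b.
Proof.
move=> psi; apply/delta_ob_eq.
by rewrite (GH_hom_Thetah psi) mulgK; case: psi => ? [].
Qed.

Lemma GH_hom_of_delta_ob_eq (a b : Lmor P (Sob L)) :
  inhabited (delta_ob a = delta_ob b -> GH_hom H a b).
Proof.
have [a' [a'a _]] := resL_iso a.
constructor => /delta_ob_eq ba_H.
exists (Lcomp (resL b) a'); split; last by rewrite -Lcomp_assoc a'a Lcomp_id_r.
by rewrite /LH_mor Thetah_comp Thetah_resL (Thetah_left_inverse a'a) Thetah_resL.
Qed.

Lemma delta_ob_surj (d : left_cosets L H) : exists a, delta_ob a = d.
Proof.
case: d => d d_coset; have /imsetP[x Gx d_x] := d_coset.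
have [phi Thetah_phi] := Theta_onto_AutS (groupVr Gx).
exists (Lcomp phi (incl (obj_sub P))); apply: val_inj => /=.
by rewrite Thetah_comp Thetah_incl mulg1 [Thetah _]Thetah_phi invgK d_x lcosetE.
Qed.

Definition delta : functor (G_H H P) (GamH_cat L H) :=
  functor_to_discrete (C := G_H H P) delta_ob_hom.

End ThetaHat.

Theorem lemma3p11 (gT gammaT : finGroupType) (p : nat)
  (L : linking_setup gT gammaT p) (H : {group gammaT})
  (HGam : H \subset Gam L) (P : Lob L) :
  exists F : functor (G_H H P) (GamH_cat L H),
    (forall a : @Lmor _ _ _ L P (Sob L), val (fob F a) = (Thetah a)^-1 *: H)
    /\ is_equivalence F.
Proof.
exists (delta H P); split=> //; split.
- apply: fully_faithful_to_discrete; first exact: GH_hom_uniq.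
  exact: GH_hom_of_delta_ob_eq.
- exact/essentially_surjective_to_discrete/delta_ob_surj.
Qed.
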